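(* Assume $CA_2$. Then there are two $\omega_1$-dense sets of reals which are not order isomorphic.
   Context: A set $A\subseteq\mathbb R$ is $\omega_1$-dense if $|(a,b)\cap A|=\omega_1$ for all reals $a<b$. A type is a sequence $\tau=\{(m_k,n_{k+1},r_{k+1})\}_{k\in\omega}$ of natural numbers with $m_0=1$; $n_k\ge2$ for $k\ge1$; every $r\in\omega$ equals $r_k$ for infinitely many $k$; $m_k>r_{k+1}$; and $m_{k+1}=r_{k+1}+(m_k-r_{k+1})n_{k+1}$ for all $k$. For a set of ordinals $X$ and $\mathcal F\subseteq[X]^{<\omega}$, $\mathcal F_k$ is the set of elements of rank $k$ in $(\mathcal F,\subsetneq)$; $A\sqsubseteq B$ means $A\subseteq B$ and every element of $B$ below an element of $A$ is in $A$; $A<B$ means every element of $A$ is below every element of $B$. $\mathcal F$ is a construction scheme over $X$ of type $\tau$ if (1) every finite subset of $X$ lies in a member of $\mathcal F$; (2) $|F|=m_k$ for $F\in\mathcal F_k$; (3) $E\cap F\sqsubseteq E,F$ for $E,F\in\mathcal F_k$; (4) each $F\in\mathcal F_{k+1}$ is the union of uniquely determined $F_0,\dots,F_{n_{k+1}-1}\in\mathcal F_k$ forming a $\Delta$-system with root $R(F)$, $|R(F)|=r_{k+1}$, $R(F)<F_0\setminus R(F)<\dots<F_{n_{k+1}-1}\setminus R(F)$. For a construction scheme $\mathcal F$ over $\omega_1$, $l\ge1$, $F\in\mathcal F_l$ and finite $\mathcal C\subseteq[\omega_1]^{<\omega}$: $F$ captures $\mathcal C$ if $|\mathcal C|\le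 n_l$ and $\mathcal C$ can be enumerated as $\{c_i\}_{i<|\mathcal C|}$ with $c_i\subseteq F_i$, $c_i\setminus R(F)\neq\emptyset$ and $\phi_i[c_0]=c_i$ where $\phi_i:F_0\to F_i$ is the increasing bijection. $\mathcal F$ is $n$-capturing if for every uncountable $S\subseteq[\omega_1]^{<\omega}$ and every $k\in\omega$ there are $\mathcal C\in[S]^n$, $l>k$ and $F\in\mathcal F_l$ capturing $\mathcal C$. $CA_n$ is the statement: for every type $\tau$ with $n\le n_k$ for all $k\ge1$ there is an $n$-capturing construction scheme over $\omega_1$ of type $\tau$. *)

From HB Require Import structures.
From mathcomp Require Import all_boot all_order all_algebra finmap.
From mathcomp Require Import boolp classical_sets functions cardinality reals.
Set Implicit Arguments. Unset Strict Implicit. Unset Printing Implicit Defensive.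
Import Order.TTheory GRing.Theory Num.Theory.
Local Open Scope order_scope.

(* A well-ordered type that is uncountable but all of whose proper initial
   segments are countable: this is exactly (a copy of) omega_1. *)
Definition omega1_like (d : Order.disp_t) (W : orderType d) : Prop :=
  [/\ well_founded (fun x y : W => x < y),
      ~ countable [set: W] &
      forall x : W, countable [set y : W | y < x]].

(* The type {(m_k, n_{k+1}, r_{k+1})}_k is given by three sequences
   m, n, r : nat -> nat (values n 0, r 0 are irrelevant). *)
Definition is_type (m n r : nat -> nat) : Prop :=
  [/\ m 0 = 1%N,
      (forall k, (1 <= k)%N -> (2 <= n k)%N),
      (forall r0 N, exists k, (N < k)%N /\ r k = r0),
      (forall k, (r k.+1 < m k)%N) &
      (forall k, m k.+1 = r k.+1 + (m k - r k.+1) * n k.+1)%N].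

Section Scheme.
Context {d : Order.disp_t} {W : orderType d}.
Local Open Scope fset_scope.

(* rank in (fam, proper inclusion): rank F = sup { rank E + 1 | E in fam, E proper subset of F } *)
Fixpoint rnk (fam : set {fset W}) (fuel : nat) (F : {fset W}) : nat :=
  match fuel with
  | 0 => 0%N
  | fuel'.+1 =>
      \max_(E <- enum_fset (fpowerset F) | `[< fam E >] && fproper E F)
         (rnk fam fuel' E).+1
  end.
Definition rank (fam : set {fset W}) (F : {fset W}) : nat := rnk fam #|` F| F.

Definition finit (A B : {fset W}) : Prop :=
  fsubset A B /\ (forall b a, b \in B -> a \in A -> b < a -> b \in A).
Definition fltS (A B : {fset W}) : Prop :=
  forall a b, a \in A -> b \in B -> a < b.

Definition decomp_props (fam : set {fset W}) (n r : nat -> nat) (k : nat)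
    (F : {fset W}) (Fs : nat -> {fset W}) (R : {fset W}) : Prop :=
  [/\ forall i, (i < n k.+1)%N -> fam (Fs i) /\ rank fam (Fs i) = k,
      F = (\bigcup_(i <- iota 0 (n k.+1)) Fs i)%fset,
      (forall i j, (i < n k.+1)%N -> (j < n k.+1)%N -> i <> j -> fsetI (Fs i) (Fs j) = R),
      #|` R| = r k.+1 &
      fltS R (fsetD (Fs 0) R) /\
      (forall i, (i.+1 < n k.+1)%N -> fltS (fsetD (Fs i) R) (fsetD (Fs i.+1) R))].

Definition construction_scheme (fam : set {fset W}) (m n r : nat -> nat) : Prop :=
  [/\ (forall A : {fset W}, exists F, fam F /\ fsubset A F),
      (forall F, fam F -> #|` F| = m (rank fam F)),
      (forall E F, fam E -> fam F -> rank fam E = rank fam F ->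
          finit (fsetI E F) E /\ finit (fsetI E F) F) &
      (forall k F, fam F -> rank fam F = k.+1 ->
          exists Fs R, decomp_props fam n r k F Fs R /\
            (forall Gs R', decomp_props fam n r k F Gs R' ->
                R' = R /\ forall i, (i < n k.+1)%N -> Gs i = Fs i))].

Definition captures (fam : set {fset W}) (n r : nat -> nat) (l : nat)
    (F : {fset W}) (C : {fset {fset W}}) : Prop :=
  (1 <= l)%N /\ (#|` C| <= n l)%N /\
  exists Fs R, decomp_props fam n r l.-1 F Fs R /\
  exists cs : seq {fset W},
    [/\ uniq cs, C =i cs &
      forall i, (i < size cs)%N ->
        let c0 := nth fset0 cs 0 in
        let ci := nth fset0 cs i in
        [/\ fsubset ci (Fs i), fsetD ci R != fset0 &
          exists phi : W -> W,
            [/\ (forall x y, x \in Fs 0 -> y \in Fs 0 -> x < y -> phi x < phi y),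
                [fset phi x | x in Fs 0] = Fs i &
                [fset phi x | x in c0] = ci]]].

Definition n_capturing (N : nat) (fam : set {fset W}) (n r : nat -> nat) : Prop :=
  forall S : set {fset W}, ~ countable S -> forall k : nat,
    exists C : {fset {fset W}},
      [/\ #|` C| = N, (forall c, c \in C -> S c) &
        exists l F, [/\ (k < l)%N, fam F, rank fam F = l & captures fam n r l F C]].

End Scheme.

Definition CA (N : nat) (d : Order.disp_t) (W : orderType d) : Prop :=
  forall m n r : nat -> nat, is_type m n r -> (forall k, (1 <= k)%N -> (N <= n k)%N) ->
    exists fam : set {fset W}, construction_scheme fam m n r /\ n_capturing N fam n r.

Local Open Scope ring_scope.
Definition omega1_dense (R : realType) (d : Order.disp_t) (W : orderType d) (A : set R) : Prop :=
  forall a b : R, a < b -> card_eq ([set x | a < x < b] `&` A) [set: W].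

Definition order_isomorphic (R : realType) (A B : set R) : Prop :=
  exists f : R -> R, set_bij A B f /\ (forall x y, A x -> A y -> x < y -> f x < f y).

(* Take the type with n_k = 2 and r_k the 2-adic valuation of k, and a
   2-capturing construction scheme of that type.  For a in omega_1 and a level j, the
   position of a inside a member of rank j containing a does not depend on the member
   (coherence); read as the digits of a mixed-radix expansion, these positions give an
   injection x of omega_1 into [0, 1].  If F of rank l+1 splits as F_0 U F_1 with root
   R, the increasing bijection F_0 -> F_1 fixes R and, off R, keeps the digits below
   level l+1 while raising digit l+1; so it raises x weakly, and strictly off R.
   Capturing a pair {a, b} thus makes x increase on both coordinates at once, hence x
   cannot reverse an uncountable family of pairs (a, h a).
   Split omega_1 into countably many disjoint uncountable pieces and put on each piece a
   copy of x scaled into some rational interval: the result A is omega_1-dense, and so is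
   B = -A.  An order isomorphism A -> B, restricted to an uncountable set on which the
   pieces of a and of its image h a are fixed, would be such a reversal of x. *)

From HB Require Import structures.
From mathcomp Require Import all_boot all_order all_algebra finmap.
From mathcomp Require Import boolp classical_sets functions cardinality reals.
From mathcomp Require Import zify ring lra.
Set Implicit Arguments. Unset Strict Implicit. Unset Printing Implicit Defensive.
Import Order.TTheory GRing.Theory Num.Theory.

Section Countability.
Local Open Scope classical_set_scope.

Lemma countableU T (A B : set T) : countable A -> countable B -> countable (A `|` B).
Proof.
by move=> cA cB; rewrite -bigcup2E; apply: bigcup_countable => // -[|[|i]] _.
Qed.

Lemma uncountable_setDN0 T (Y Z : set T) : ~ countable Y -> countable Z ->
  exists y, Y y /\ ~ Z y.
Proof.
move=> hY hZ; apply: contrapT => H; apply/hY/(sub_countable _ hZ)/subset_card_le.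
by move=> y Yy; apply: contrapT => Zy; apply: H; exists y.
Qed.

Lemma uncountable_fiber T (I : countType) (U : set T) (f : T -> I) :
  ~ countable U -> exists i, ~ countable (U `&` f @^-1` [set i]).
Proof.
move=> hU; apply: contrapT => H; apply/hU/(sub_countable _ (bigcup_countable
  (D := [set: I]) (F := fun i => U `&` f @^-1` [set i]) (countableP _) _)).
  by apply: subset_card_le => t Ut; exists (f t).
by move=> i _; apply: contrapT => hi; apply: H; exists i.
Qed.

Lemma infinite_injseq T (A : set T) : infinite_set A ->
  exists a : nat -> T, (forall i, A (a i)) /\ injective a.
Proof.
elim/Ppointed: T => T in A *; first by rewrite emptyE => /(_ (finite_set0 _)).
move=> /infiniteP/pcard_leP[a]; exists a; split=> [i|i j eij]; first exact: funS.
by apply: (@inj _ _ _ a); rewrite ?inE.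
Qed.

Lemma card_le_set_inj T U (A : set T) (B : set U) (f : T -> U) :
  set_fun A B f -> set_inj A f -> (A #<= B)%card.
Proof.
move=> fAB finj; have [g] : $|{injfun A >-> B}| by apply/injfunPex; exists f.
exact: inj_card_le.
Qed.

End Countability.

Section Omega1.
Local Open Scope classical_set_scope.
Local Open Scope order_scope.
Context {d : Order.disp_t} {W : orderType d}.
Hypothesis lt_wf : well_founded (fun x y : W => x < y).
Hypothesis W_uncountable : ~ countable [set: W].
Hypothesis countable_lt : forall a : W, countable [set b | b < a].

Lemma countable_le (a : W) : countable [set b | b <= a].
Proof.
apply: sub_countable (countableU (countable1 a) (countable_lt a)).
by apply: subset_card_le => b; rewrite /= le_eqVlt => /orP[/eqP|]; [left|right].
Qed.

Lemma uncountable_gt (a : W) : ~ countable [set b | a < b].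
Proof.
move=> h; apply/W_uncountable/(sub_countable _ (countableU (countable_le a) h)).
by apply: subset_card_le => b _ /=; case: (leP b a); [left|right].
Qed.

Section Embedding.
Variable Y : set W.
Hypothesis Y_uncountable : ~ countable Y.

Definition embed_step (a : W) (rec : forall b, b < a -> W) : W :=
  xget a [set y | Y y /\ forall b (ba : b < a), rec b ba < y].

Definition embed : W -> W := Fix lt_wf (fun _ => W) embed_step.

Lemma embed_spec a : Y (embed a) /\ forall b, b < a -> embed b < embed a.
Proof.
have -> : embed a = xget a [set y | Y y /\ forall b, b < a -> embed b < y].
  rewrite /embed Fix_eq // => x f g fg; congr embed_step.
  by apply: functional_extensionality_dep => b; apply: functional_extensionality_dep.
apply: (@xgetPex _ a [set y | Y y /\ forall b, b < a -> embed b < y]).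
have [y [Yy Ky]] := uncountable_setDN0 Y_uncountable
  (bigcup_countable (countable_lt a) (fun b _ => countable_le (embed b))).
exists y; split=> // b ba; rewrite ltNge; apply/negP => yb; apply: Ky; by exists b.
Qed.

Lemma card_setT_le_uncountable : ([set: W] #<= Y)%card.
Proof.
apply: (@card_le_set_inj _ _ _ _ embed) => [a _|a b _ _ eab]; first exact: (embed_spec a).1.
by case: (ltgtP a b) => // [/(embed_spec b).2|/(embed_spec a).2]; rewrite eab ltxx.
Qed.

End Embedding.

Lemma omega1_dense_range (R : realType) (Y : W -> R) :
  (forall a b : R, (a < b)%R -> exists2 Z : set W, ~ countable Z &
     (forall z, Z z -> (a < Y z < b)%R) /\ {in Z &, injective Y}) ->
  omega1_dense W (range Y).
Proof.
move=> Y_dense a b ab; have [Z Z_unc [Z_ab Y_inj]] := Y_dense a b ab.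
apply/card_eqPle; split.
  by apply: card_le_trans (card_image_le Y setT); apply: subset_card_le => t [].
apply: card_le_trans (card_setT_le_uncountable Z_unc) _.
apply: (@card_le_set_inj _ _ _ _ Y) Y_inj => z Zz.
by split; [exact: Z_ab | exists z].
Qed.

(* With code b injective on [< b], each a has some n with code b a = n for uncountably
   many b > a.  One n0 serves infinitely many a_k, and the sets of such b for distinct
   a_k are disjoint because code b is injective. *)
Lemma uncountable_partition : exists Wk : nat -> set W,
  (forall k, ~ countable (Wk k)) /\ (forall i j a, Wk i a -> Wk j a -> i = j).
Proof.
have /all_sig[code code_inj] b : {e : W -> nat | {in [set c | c < b] &, injective e}}.
  exact/cid/countable_injP/countable_lt.
pose T n a := [set b | a < b] `&` (code^~ a) @^-1` [set n].
have /all_sig[index index_unc] a : {n | ~ countable (T n a)}.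
  exact/cid/uncountable_fiber/uncountable_gt.
have [n0 Z_unc] := uncountable_fiber index W_uncountable.
have [a [aZ a_inj]] := infinite_injseq (fun fin => Z_unc (finite_set_countable fin)).
exists (fun k => T n0 (a k)); split=> [k|i j b [ib eib] [jb ejb]].
  by case: (aZ k) => _ /= <-.
by apply/a_inj/(code_inj b); rewrite ?inE //= eib ejb.
Qed.

End Omega1.

Section Types.
Variables m n r : nat -> nat.
Hypothesis mnr_type : is_type m n r.

Lemma type_size_lt_succ k : (m k < m k.+1)%N.
Proof.
case: mnr_type => _ n_ge2 _ r_lt ->.
have : ((m k - r k.+1) * 2 <= (m k - r k.+1) * n k.+1)%N by rewrite leq_mul2l n_ge2 ?orbT.
have := r_lt k; lia.
Qed.

Lemma type_size_ltn : {mono m : i j / (i < j)%N}.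
Proof.
apply/leqW_mono/leq_mono; apply: homo_ltn; [exact: ltn_trans | exact: type_size_lt_succ].
Qed.

Lemma type_size_gt0 k : (0 < m k)%N.
Proof.
case: k => [|k]; first by case: mnr_type => ->.
exact: leq_ltn_trans (leq0n _) (type_size_lt_succ k).
Qed.

End Types.

Definition log_root (k : nat) : nat := logn 2 k.
Definition two_pieces (k : nat) : nat := 2.
Fixpoint log_size (k : nat) : nat :=
  if k is k'.+1 then log_root k + (log_size k' - log_root k) * 2 else 1.

Lemma log_root_le k : (log_root k.+1 <= k)%N.
Proof.
have : (2 ^ log_root k.+1 <= k.+1)%N by apply/dvdn_leq/pfactor_dvdnn.
have : (log_root k.+1 < 2 ^ log_root k.+1)%N by exact: ltn_expl.
lia.
Qed.

Lemma log_size_gt k : (k < log_size k)%N.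
Proof. by elim: k => //= k IH; have := log_root_le k; lia. Qed.

Lemma log_type : is_type log_size two_pieces log_root.
Proof.
split=> // [r0 N|k]; last by have := log_root_le k; have := log_size_gt k; lia.
exists (2 ^ r0 * N.*2.+1)%N; split.
  by apply: (@leq_trans N.*2.+1); [lia | rewrite leq_pmull ?expn_gt0].
rewrite /log_root lognM ?expn_gt0 // pfactorK // logn_coprime ?addn0 //.
by rewrite coprime2n /= odd_double.
Qed.

Section Positions.
Context {d : Order.disp_t} {W : orderType d}.
Local Open Scope order_scope.
Local Open Scope fset_scope.
Implicit Types (A B F : {fset W}) (a b t z : W).

Definition below F z : {fset W} := [fset t in F | t < z].
Definition pos F z : nat := #|` below F z|.

Lemma in_below F z t : (t \in below F z) = (t \in F) && (t < z).
Proof. by rewrite !inE. Qed.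

Lemma below_sub F z : fsubset (below F z) F.
Proof. by apply/fsubsetP => t; rewrite in_below => /andP[]. Qed.

Lemma pos_lt_card F z : z \in F -> (pos F z < #|` F|)%N.
Proof.
move=> zF; rewrite /pos (cardfsD1 z F) zF ltnS; apply: fsubset_leq_card.
by apply/fsubsetP => t; rewrite in_below !inE => /andP[-> /lt_eqF ->].
Qed.

Lemma pos_lt F a b : a \in F -> a < b -> (pos F a < pos F b)%N.
Proof.
move=> aF ab; rewrite /pos (cardfsD1 a (below F b)) in_below aF ab ltnS.
apply: fsubset_leq_card; apply/fsubsetP => t; rewrite !in_below !inE.
by case/andP=> -> ta; rewrite (lt_trans ta ab) (lt_eqF ta).
Qed.

Lemma pos_inj F : {in F &, injective (pos F)}.
Proof.
move=> a b aF bF eab; case: (ltgtP a b) => // [/(pos_lt aF)|/(pos_lt bF)].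
  by rewrite eab ltnn.
by rewrite eab ltnn.
Qed.

Lemma pos_initial A B z : fsubset A B ->
  (forall t, t \in B -> t < z -> t \in A) -> pos A z = pos B z.
Proof.
move=> AB BzA; congr #|` _|; apply/fsetP => t; rewrite !in_below.
apply/andP/andP => [[/(fsubsetP AB) tB tz] | [tB tz]]; split => //; exact: BzA.
Qed.

Lemma pos_imfset (phi : W -> W) A z : {in A &, {homo phi : x y / x < y}} ->
  z \in A -> pos [fset phi x | x in A] (phi z) = pos A z.
Proof.
move=> phi_lt zA; have phi_le := le_mono_in phi_lt; rewrite /pos.
have -> : below [fset phi x | x in A] (phi z) = [fset phi x | x in below A z].
  apply/fsetP => u; rewrite in_below.
  apply/andP/imfsetP => [[/imfsetP[x /= xA ->] xz] | [x /= + ->]].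
    by exists x; rewrite // in_below xA /= ltNge -phi_le // -ltNge.
  by rewrite in_below => /andP[xA xz]; split; [apply/imfsetP; exists x | exact: phi_lt].
rewrite card_in_imfset // => x y /(fsubsetP (below_sub _ _)) xA /(fsubsetP (below_sub _ _)).
exact: (inc_inj_in phi_le).
Qed.

Lemma fset2_lt_inj (x y x' y' : W) :
  x < y -> x' < y' -> [fset x; y] = [fset x'; y'] -> x = x' /\ y = y'.
Proof.
move=> xy xy' e.
have /fset2P x_eq : x \in [fset x'; y'] by rewrite -e fset21.
have /fset2P y_eq : y \in [fset x'; y'] by rewrite -e fset22.
have /fset2P x'_eq : x' \in [fset x; y] by rewrite e fset21.
case: x_eq y_eq x'_eq => ex [] ey [] ex'; subst => //.
all: by move: xy xy'; rewrite ?ltxx // => /lt_trans/[apply]; rewrite ltxx.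
Qed.

End Positions.

Section Scheme.
Context {d : Order.disp_t} {W : orderType d}.
Local Open Scope order_scope.
Local Open Scope fset_scope.
Variables (m n r : nat -> nat) (fam : set {fset W}).
Hypothesis mnr_type : is_type m n r.
Hypothesis n_two : forall k, n k.+1 = 2.
Hypothesis fam_scheme : construction_scheme fam m n r.

Lemma card_fam F : fam F -> #|` F| = m (rank fam F).
Proof. by case: fam_scheme => _ + _ _; apply. Qed.

Section Decomposition.
Variables (k : nat) (F : {fset W}) (Fs : nat -> {fset W}) (R : {fset W}).
Hypothesis F_dec : decomp_props fam n r k F Fs R.

Lemma dec_piece i : (i < 2)%N ->
  [/\ fam (Fs i), rank fam (Fs i) = k & #|` Fs i| = m k].
Proof.
case: F_dec => + _ _ _ _ => /(_ i); rewrite n_two => /[apply] -[Fi rFi].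
by rewrite card_fam // rFi.
Qed.

Lemma dec_union : F = Fs 0 `|` Fs 1.
Proof. by case: F_dec => _ -> _ _ _; rewrite n_two /= !big_cons big_nil fsetU0. Qed.

Lemma dec_root : Fs 0 `&` Fs 1 = R.
Proof. by case: F_dec => _ _ + _ _; apply; rewrite ?n_two. Qed.

Lemma dec_card_root : #|` R| = r k.+1.
Proof. by case: F_dec. Qed.

Lemma dec_root_sub i : (i < 2)%N -> fsubset R (Fs i).
Proof. by case: i => [|[|]] // _; rewrite -dec_root ?fsubsetIl ?fsubsetIr. Qed.

Lemma dec_piece_sub i : (i < 2)%N -> fsubset (Fs i) F.
Proof. by case: i => [|[|]] // _; rewrite dec_union ?fsubsetUl ?fsubsetUr. Qed.

Lemma dec_lt_root0 : fltS R (Fs 0 `\` R).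
Proof. by case: F_dec => _ _ _ _ []. Qed.

Lemma dec_lt01 : fltS (Fs 0 `\` R) (Fs 1 `\` R).
Proof. by case: F_dec => _ _ _ _ [_]; apply; rewrite n_two. Qed.

Lemma dec_lt_root a b : a \in R -> b \in F -> b \notin R -> a < b.
Proof.
have [w w0] : exists w, w \in Fs 0 `\` R.
  apply/fset0Pn; rewrite -cardfs_gt0 cardfsDS ?dec_root_sub //.
  have [_ _ ->] := dec_piece (i := 0) isT; rewrite dec_card_root.
  by case: mnr_type => _ _ _ + _ => /(_ k); lia.
move=> aR; rewrite dec_union inE => /orP[] bF bR.
  by apply: dec_lt_root0; rewrite // inE bR.
by apply: lt_trans (dec_lt_root0 aR w0) (dec_lt01 w0 _); rewrite inE bR.
Qed.

Lemma pos_root G z : fsubset R G -> fsubset G F -> z \in R -> pos G z = pos R z.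
Proof.
move=> RG GF zR; apply/esym/pos_initial => // t tG tz; apply/negPn/negP => tR.
by have := dec_lt_root zR (fsubsetP GF _ tG) tR; rewrite ltNge (ltW tz).
Qed.

Lemma pos_root_lt G z : fsubset R G -> fsubset G F -> z \in R -> (pos G z < r k.+1)%N.
Proof. by move=> RG GF zR; rewrite (pos_root RG GF zR) -dec_card_root pos_lt_card. Qed.

Lemma pos_nonroot_ge G z : fsubset R G -> z \in F -> z \notin R -> (r k.+1 <= pos G z)%N.
Proof.
move=> RG zF zR; rewrite -dec_card_root; apply: fsubset_leq_card.
by apply/fsubsetP => a aR; rewrite in_below (fsubsetP RG _ aR) dec_lt_root.
Qed.

Lemma pos_piece0 z : z \in Fs 0 -> pos F z = pos (Fs 0) z.
Proof.
move=> z0; apply/esym/pos_initial; first exact: dec_piece_sub.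
move=> t tF tz; apply/negPn/negP => t0.
have tR : t \notin R by apply: contra t0; apply/fsubsetP/dec_root_sub.
have t1 : t \in Fs 1 by move: tF; rewrite dec_union inE (negbTE t0).
have zt : z < t.
  case zR : (z \in R); first by apply: dec_lt_root; rewrite // (fsubsetP (dec_piece_sub _)).
  by apply: dec_lt01; rewrite inE ?zR ?tR.
by move: tz; rewrite ltNge (ltW zt).
Qed.

Lemma pos_piece1 z : z \in Fs 1 -> z \notin R ->
  pos F z = (pos (Fs 1) z + (m k - r k.+1))%N.
Proof.
move=> z1 zR; have [_ _ card0] := dec_piece (i := 0) isT; rewrite /pos.
have -> : below F z = below (Fs 1) z `|` (Fs 0 `\` R).
  apply/fsetP => t; rewrite in_below [in LHS]dec_union !inE.
  apply/idP/idP => [/andP[/orP[t0|t1] tz]|/orP[/andP[t1 tz]|/andP[tR t0]]].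
  - case tR : (t \in R); last by rewrite t0 orbT.
    by rewrite (fsubsetP (dec_root_sub (i := 1) isT) _ tR) tz.
  - by rewrite t1 tz.
  - by rewrite t1 orbT tz.
  - by rewrite t0 /=; apply: dec_lt01; rewrite inE ?tR ?t0 ?zR.
rewrite cardfsU.
have -> : below (Fs 1) z `&` (Fs 0 `\` R) = fset0.
  apply/fsetP => t; rewrite !inE -dec_root !inE.
  by case: (t \in Fs 0); case: (t \in Fs 1); rewrite ?andbF.
by rewrite cardfs0 subn0 cardfsDS ?dec_root_sub // card0 dec_card_root.
Qed.

End Decomposition.

Definition fam_at (j : nat) (z : W) : set {fset W} :=
  [set G | [/\ fam G, rank fam G = j & z \in G]].

(* The junk value [pos fset0 z] is never used: see [fam_at_nonempty] and [level_posE]. *)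
Definition level_pos (j : nat) (z : W) : nat := pos (xget fset0 (fam_at j z)) z.

Lemma fam_at_down l F z : fam_at l z F -> forall j, (j <= l)%N -> exists G, fam_at j z G.
Proof.
elim: l F => [|l IH] F [fF rF zF] j; first by rewrite leqn0 => /eqP ->; exists F.
rewrite leq_eqVlt => /orP[/eqP ->|]; first by exists F.
rewrite ltnS => jl; case: fam_scheme => _ _ _ /(_ l F fF rF) [Fs [R [F_dec _]]].
move: zF; rewrite (dec_union F_dec) inE => /orP[] zFi.
  by have [? ? _] := dec_piece F_dec (i := 0) isT; apply: (IH (Fs 0)).
by have [? ? _] := dec_piece F_dec (i := 1) isT; apply: (IH (Fs 1)).
Qed.

Hypothesis W_infinite : infinite_set [set: W].

Lemma fam_at_nonempty j z : exists F, fam_at j z F.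
Proof.
have [B _ cardB] := infinite_set_fset (m j) W_infinite.
case: fam_scheme => /(_ (z |` B)) [F [fF zBF]] _ _ _.
apply: (@fam_at_down (rank fam F) F); first by split; rewrite // (fsubsetP zBF) ?fset1U1.
rewrite leqNgt -(type_size_ltn mnr_type) -card_fam // -leqNgt.
exact: leq_trans cardB (fsubset_leq_card (fsubset_trans (fsubsetU1 _ _) zBF)).
Qed.

Lemma level_posE j z F : fam_at j z F -> level_pos j z = pos F z.
Proof.
move=> Fjz; rewrite /level_pos; have := xgetI fset0 Fjz.
set G := xget _ _ => -[fG rG zG]; case: Fjz => fF rF zF.
case: fam_scheme => _ _ /(_ G F fG fF (etrans rG (esym rF))) [[_ initG] [_ initF]] _.
have zGF : z \in G `&` F by rewrite inE zG zF.
rewrite -(@pos_initial _ _ (G `&` F) G) ?fsubsetIl //; last by move=> t tG; apply: initG.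
by apply: pos_initial; rewrite ?fsubsetIr // => t tF; apply: initF.
Qed.

Lemma level_pos_lt j z : (level_pos j z < m j)%N.
Proof.
have [F Fjz] := fam_at_nonempty j z; rewrite (level_posE Fjz).
by case: Fjz => fF <- zF; rewrite -card_fam // pos_lt_card.
Qed.

Lemma level_pos_down k z : level_pos k z =
  if (level_pos k.+1 z < m k)%N then level_pos k.+1 z
  else (level_pos k.+1 z - (m k - r k.+1))%N.
Proof.
have [F Fz] := fam_at_nonempty k.+1 z; rewrite (level_posE Fz).
case: (Fz) => fF rF zF; case: fam_scheme => _ _ _ /(_ k F fF rF) [Fs [R [F_dec _]]].
have [f0 r0 card0] := dec_piece F_dec (i := 0) isT.
have [f1 r1 _] := dec_piece F_dec (i := 1) isT.
have [z0|z0] := boolP (z \in Fs 0).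
  rewrite (pos_piece0 F_dec z0) -card0 pos_lt_card //.
  by rewrite (level_posE (And3 f0 r0 z0)).
have z1 : z \in Fs 1 by move: zF; rewrite (dec_union F_dec) inE (negbTE z0).
have zR : z \notin R by apply: contra z0; apply: (fsubsetP (dec_root_sub F_dec (i := 0) isT)).
have := pos_nonroot_ge F_dec (dec_root_sub F_dec (i := 1) isT) zF zR.
rewrite (pos_piece1 F_dec z1 zR) (level_posE (And3 f1 r1 z1)).
case: mnr_type => _ _ _ /(_ k) r_lt _ ge_r; rewrite ifN; [lia | rewrite -leqNgt; lia].
Qed.

Lemma level_pos_eq_down j a b : level_pos j a = level_pos j b ->
  forall i, (i <= j)%N -> level_pos i a = level_pos i b.
Proof.
elim: j => [|j IH] eq_ab i; first by rewrite leqn0 => /eqP ->.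
rewrite leq_eqVlt ltnS => /orP[/eqP -> //|]; apply: IH.
by rewrite level_pos_down eq_ab -level_pos_down.
Qed.

Lemma level_pos_sep a b : a != b -> exists j, level_pos j a != level_pos j b.
Proof.
move=> ab; case: fam_scheme => /(_ [fset a; b]) [F [fF abF]] _ _ _.
have aF : a \in F by rewrite (fsubsetP abF) // !inE eqxx.
have bF : b \in F by rewrite (fsubsetP abF) // !inE eqxx orbT.
exists (rank fam F); rewrite (level_posE (And3 fF erefl aF)) (level_posE (And3 fF erefl bF)).
by apply: contra ab => /eqP /(pos_inj aF bF) ->.
Qed.

Section Shift.
Variables (l : nat) (F : {fset W}) (Fs : nat -> {fset W}) (R : {fset W}) (phi : W -> W).
Hypotheses (fF : fam F) (rF : rank fam F = l.+1).
Hypothesis F_dec : decomp_props fam n r l F Fs R.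
Hypothesis phi_lt : {in Fs 0 &, {homo phi : x y / x < y}}.
Hypothesis phi_img : [fset phi x | x in Fs 0] = Fs 1.

Let root_sub0 := dec_root_sub F_dec (i := 0) isT.
Let root_sub1 := dec_root_sub F_dec (i := 1) isT.
Let piece_sub0 := dec_piece_sub F_dec (i := 0) isT.
Let piece_sub1 := dec_piece_sub F_dec (i := 1) isT.

Lemma shift_in e : e \in Fs 0 -> phi e \in Fs 1.
Proof. by move=> e0; rewrite -phi_img; apply/imfsetP; exists e. Qed.

Lemma shift_pos e : e \in Fs 0 -> pos (Fs 1) (phi e) = pos (Fs 0) e.
Proof. by move=> e0; rewrite -phi_img pos_imfset. Qed.

Lemma shift_root e : e \in R -> phi e = e.
Proof.
move=> eR; have e0 := fsubsetP root_sub0 _ eR; have phie1 := shift_in e0.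
have phieR : phi e \in R.
  apply: contraT => phieR.
  have := pos_nonroot_ge F_dec root_sub1 (fsubsetP piece_sub1 _ phie1) phieR.
  by rewrite shift_pos // leqNgt (pos_root_lt F_dec root_sub0 piece_sub0 eR).
apply: (pos_inj phie1 (fsubsetP root_sub1 _ eR)).
by rewrite shift_pos // !(pos_root F_dec).
Qed.

Lemma shift_level_pos e : e \in Fs 0 -> e \notin R ->
  (forall i, (i <= l)%N -> level_pos i (phi e) = level_pos i e) /\
  (level_pos l.+1 e < level_pos l.+1 (phi e))%N.
Proof.
move=> e0 eR; have e1 := shift_in e0.
have eF := fsubsetP piece_sub0 _ e0; have phieF := fsubsetP piece_sub1 _ e1.
have phieR : phi e \notin R.
  apply/negP => phieR; have := pos_nonroot_ge F_dec root_sub0 eF eR.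
  by rewrite -shift_pos // leqNgt (pos_root_lt F_dec root_sub1 piece_sub1 phieR).
split.
  have [f0 r0 _] := dec_piece F_dec (i := 0) isT.
  have [f1 r1 _] := dec_piece F_dec (i := 1) isT.
  apply: level_pos_eq_down.
  by rewrite (level_posE (And3 f0 r0 e0)) (level_posE (And3 f1 r1 e1)) shift_pos.
rewrite (level_posE (And3 fF rF eF)) (level_posE (And3 fF rF phieF)).
rewrite (pos_piece0 F_dec e0) (pos_piece1 F_dec e1 phieR) shift_pos //.
by case: mnr_type => _ _ _ /(_ l) + _; lia.
Qed.

End Shift.

End Scheme.

Section Radix.
Variables (R : realType) (M : nat -> nat).
Hypothesis M_gt0 : forall j, (0 < M j)%N.
Local Open Scope ring_scope.

(* The factor 4 makes all digits after position j weigh less than a third of one unit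
   at position j (radix_psum_tail). *)
Definition radix_weight (j : nat) : R := ((\prod_(i < j.+1) (4 * M i))%N%:R)^-1.

Definition radix_psum (p : nat -> nat) (k : nat) : R :=
  \sum_(i < k) (p i)%:R * radix_weight i.

Definition radix_real (p : nat -> nat) : R := sup (range (radix_psum p)).

Lemma radix_weight_gt0 j : 0 < radix_weight j.
Proof.
rewrite invr_gt0 ltr0n; elim/big_ind: _ => // [a b|i _]; first by rewrite muln_gt0 => ->.
by rewrite muln_gt0 M_gt0.
Qed.

Lemma radix_weight0 : 4 * (M 0)%:R * radix_weight 0 = 1.
Proof.
rewrite /radix_weight big_ord_recr big_ord0 /= mul1n natrM mulfV //.
by rewrite -natrM pnatr_eq0 -lt0n muln_gt0 M_gt0.
Qed.

Lemma radix_weightS j : 4 * (M j.+1)%:R * radix_weight j.+1 = radix_weight j.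
Proof.
have := radix_weight_gt0 j; rewrite invr_gt0 => P_gt0.
have := M_gt0 j.+1; rewrite -(ltr0n R) => Mj_gt0.
rewrite /radix_weight [\prod_(i < j.+2) _]big_ord_recr /= !natrM.
by field; rewrite !gt_eqF.
Qed.

Lemma radix_psumS p k : radix_psum p k.+1 = radix_psum p k + (p k)%:R * radix_weight k.
Proof. by rewrite /radix_psum big_ord_recr. Qed.

Lemma radix_psum_le p i k : (i <= k)%N -> radix_psum p i <= radix_psum p k.
Proof.
move=> /subnK <-; elim: (k - i)%N => [|t IH]; first by rewrite add0n.
rewrite addSn radix_psumS; apply: le_trans IH _.
by rewrite lerDl mulr_ge0 // ltW // radix_weight_gt0.
Qed.

Lemma radix_psum_eq p q k : (forall i, (i < k)%N -> p i = q i) ->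
  radix_psum p k = radix_psum q k.
Proof. by move=> pq; apply: eq_bigr => i _; rewrite pq. Qed.

Section Bounded.
Variable p : nat -> nat.
Hypothesis p_lt : forall j, (p j < M j)%N.

Lemma radix_psum_tail j t :
  radix_psum p (j.+1 + t) <= radix_psum p j.+1 + (radix_weight j - radix_weight (j + t)) / 3.
Proof.
elim: t => [|t IH]; first by rewrite !addn0 subrr mul0r addr0.
rewrite !addnS radix_psumS !addSn; move: IH; rewrite addSn.
have := radix_weightS (j + t); have := radix_weight_gt0 (j + t).+1.
have : (p (j + t).+1)%:R <= (M (j + t).+1)%:R :> R by rewrite ler_nat ltnW.
set u := radix_weight (j + t).+1; set a := (p _)%:R; set b := (M _)%:R.
move=> a_le u_gt0; rewrite -mulrA => bu IH.
have : a * u <= b * u by rewrite ler_pM2r.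
have : 1 * u <= b * u by rewrite ler_pM2r // ler1n M_gt0.
lra.
Qed.

Lemma radix_psum_ub j k : radix_psum p k <= radix_psum p j.+1 + radix_weight j / 3.
Proof.
have w_gt0 := radix_weight_gt0.
case: (leqP k j.+1) => [kj|jk].
  by apply: le_trans (radix_psum_le p kj) _; rewrite lerDl divr_ge0 // ltW.
rewrite -(subnKC (ltnW jk)); apply: le_trans (radix_psum_tail _ _) _.
have := w_gt0 (j + (k - j.+1))%N; lra.
Qed.

Lemma radix_real_ge k : radix_psum p k <= radix_real p.
Proof.
apply: sup_upper_bound; last by exists k.
split; first by exists (radix_psum p 0), 0%N.
by exists (radix_psum p 1 + radix_weight 0 / 3) => _ [k' _ <-]; exact: radix_psum_ub.
Qed.

Lemma radix_real_le j : radix_real p <= radix_psum p j.+1 + radix_weight j / 3.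
Proof.
apply: ge_sup; first by exists (radix_psum p 0), 0%N.
by move=> _ [k _ <-]; exact: radix_psum_ub.
Qed.

Lemma radix_real_in01 : 0 <= radix_real p <= 1.
Proof.
apply/andP; split; first by apply: le_trans (radix_real_ge 0); rewrite /radix_psum big_ord0.
apply: le_trans (radix_real_le 0) _; rewrite radix_psumS /radix_psum big_ord0 add0r.
have := radix_weight0; have := radix_weight_gt0 0.
have : (p 0)%:R + 1 <= (M 0)%:R :> R by rewrite natr1 ler_nat.
set a := (p 0)%:R; set b := (M 0)%:R; set w := radix_weight 0 => ab w_gt0 bw.
have : (a + 1) * w <= b * w by rewrite ler_pM2r.
lra.
Qed.

End Bounded.

Lemma radix_real_lt p q j : (forall j, (p j < M j)%N) -> (forall j, (q j < M j)%N) ->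
  (forall i, (i < j)%N -> p i = q i) -> (p j < q j)%N -> radix_real p < radix_real q.
Proof.
move=> p_lt q_lt pq pj_lt; apply: le_lt_trans (radix_real_le p_lt j) _.
apply: lt_le_trans (radix_real_ge q_lt j.+1); rewrite !radix_psumS (radix_psum_eq pq).
have : (p j)%:R + 1 <= (q j)%:R :> R by rewrite natr1 ler_nat.
have := radix_weight_gt0 j; set w := radix_weight j; set a := (p j)%:R; set b := (q j)%:R.
move=> w_gt0 ab; have : (a + 1) * w <= b * w by rewrite ler_pM2r.
lra.
Qed.

Lemma radix_real_inj p q : (forall j, (p j < M j)%N) -> (forall j, (q j < M j)%N) ->
  (exists j, p j != q j) -> radix_real p != radix_real q.
Proof.
move=> p_lt q_lt pq; case: (ex_minnP pq) => j pqj pq_min.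
have pq_eq i : (i < j)%N -> p i = q i.
  by move=> ij; apply/eqP; apply: contraTT ij; rewrite -leqNgt; exact: pq_min.
case: (ltngtP (p j) (q j)) pqj => // [pj_lt|qj_lt] _.
  by rewrite lt_eqF // (radix_real_lt p_lt q_lt pq_eq).
by rewrite gt_eqF // (radix_real_lt q_lt p_lt (fun i ij => esym (pq_eq i ij))).
Qed.

End Radix.

Section SchemeCode.
Context {d : Order.disp_t} {W : orderType d}.
Local Open Scope order_scope.
Local Open Scope fset_scope.
Variables (m n r : nat -> nat) (fam : set {fset W}) (R : realType).
Hypothesis mnr_type : is_type m n r.
Hypothesis n_two : forall k, n k.+1 = 2.
Hypothesis fam_scheme : construction_scheme fam m n r.
Hypothesis W_infinite : infinite_set [set: W].

Definition scheme_code (a : W) : R := radix_real R m (fun j => level_pos fam j a).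

Let code_digit_lt a := level_pos_lt mnr_type n_two fam_scheme W_infinite ^~ a.

Lemma scheme_code_in01 a : (0 <= scheme_code a <= 1)%R.
Proof. exact: (radix_real_in01 R (type_size_gt0 mnr_type) (code_digit_lt a)). Qed.

Lemma scheme_code_inj : injective scheme_code.
Proof.
move=> a b; apply: contra_eq => ab.
apply: (radix_real_inj R (type_size_gt0 mnr_type) (code_digit_lt a) (code_digit_lt b)).
exact: (level_pos_sep fam_scheme ab).
Qed.

Lemma shift_scheme_code l F Fs Rt (phi : W -> W) : fam F -> rank fam F = l.+1 ->
  decomp_props fam n r l F Fs Rt -> {in Fs 0 &, {homo phi : x y / x < y}} ->
  [fset phi x | x in Fs 0]%fset = Fs 1 -> forall e, e \in Fs 0 ->
  (scheme_code e <= scheme_code (phi e))%R /\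
  (e \notin Rt -> (scheme_code e < scheme_code (phi e))%R).
Proof.
move=> fF rF F_dec phi_lt phi_img e e0.
have code_lt : e \notin Rt -> (scheme_code e < scheme_code (phi e))%R.
  move=> eR; have [eq_below lt_l] := shift_level_pos mnr_type n_two fam_scheme W_infinite
    fF rF F_dec phi_lt phi_img e0 eR.
  apply: (radix_real_lt R (type_size_gt0 mnr_type) (code_digit_lt e)
    (code_digit_lt (phi e)) _ lt_l).
  by move=> i /eq_below ->.
split=> //; have [eR|eR] := boolP (e \in Rt); last exact/ltW/code_lt.
by rewrite (shift_root mnr_type n_two fam_scheme F_dec phi_lt phi_img eR).
Qed.

Hypothesis fam_capturing : n_capturing 2 fam n r.

Lemma capture_increasing_pair (U : set W) (u v : W -> W) : ~ countable U ->
  (forall a, U a -> u a < v a) ->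
  (forall a b, U a -> U b -> u a = u b -> v a = v b -> a = b) ->
  exists a b, [/\ U a, U b, (scheme_code (u a) <= scheme_code (u b))%R
                & (scheme_code (v a) < scheme_code (v b))%R].
Proof.
move=> U_unc uv pair_inj; pose S := [set [fset u a; v a]%fset | a in U]%classic.
have S_unc : ~ countable S.
  move=> S_cnt; apply/U_unc/(card_le_trans _ S_cnt).
  apply: (@card_le_set_inj _ _ U S (fun a => [fset u a; v a]%fset)) => [a Ua|].
    by exists a.
  move=> a b /set_mem Ua /set_mem Ub /(fset2_lt_inj (uv a Ua) (uv b Ub)) [].
  exact: pair_inj.
have [C [cardC CS [l [F [_ fF rF [l_gt0 [_ [Fs [Rt [F_dec [cs [cs_uniq Ccs cs_spec]]]]]]]]]]]]
  := fam_capturing S_unc 0.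
have size_cs : size cs = 2 by rewrite -cardC; apply/esym/perm_size/uniq_perm.
case: l l_gt0 rF F_dec => // l _ rF /= F_dec in cs_spec *.
have [c0_sub c0_notroot _] := cs_spec 0 ltac:(by rewrite size_cs).
have [_ _ [phi [phi_lt phi_img c0c1]]] := cs_spec 1 ltac:(by rewrite size_cs).
have [a Ua ea] : S (nth fset0 cs 0) by apply: CS; rewrite Ccs mem_nth ?size_cs.
have [b Ub eb] : S (nth fset0 cs 1) by apply: CS; rewrite Ccs mem_nth ?size_cs.
move: c0_sub c0_notroot c0c1; rewrite -ea -eb imfset_fset2 => c0_sub c0_notroot c0c1.
have ua0 : u a \in Fs 0 by rewrite (fsubsetP c0_sub) ?fset21.
have va0 : v a \in Fs 0 by rewrite (fsubsetP c0_sub) ?fset22.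
have vaR : v a \notin Rt.
  apply: contra c0_notroot => vaR; have uaR : u a \in Rt.
    apply: contraT => uaR; have ua0R : u a \in Fs 0 `\` Rt by rewrite in_fsetD uaR.
    by have := lt_trans (dec_lt_root0 F_dec vaR ua0R) (uv a Ua); rewrite ltxx.
  by rewrite fsetD_eq0; apply/fsubsetP => x /fset2P[] ->.
have [phi_ua phi_va] := fset2_lt_inj (phi_lt _ _ ua0 va0 (uv a Ua)) (uv b Ub) c0c1.
exists a, b; split=> //.
  by rewrite -phi_ua; case: (shift_scheme_code fF rF F_dec phi_lt phi_img ua0).
by rewrite -phi_va; case: (shift_scheme_code fF rF F_dec phi_lt phi_img va0) => _; apply.
Qed.

Lemma scheme_code_not_reversed (U : set W) (h : W -> W) : ~ countable U ->
  ~ (forall a b, U a -> U b ->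
       (scheme_code a < scheme_code b)%R -> (scheme_code (h b) < scheme_code (h a))%R).
Proof.
move=> U_unc rev.
have fix_uniq a b : U a -> U b -> h a = a -> h b = b -> a = b.
  move=> Ua Ub ha hb; apply: scheme_code_inj.
  case: (ltgtP (scheme_code a) (scheme_code b)) => // lt.
    by have := rev _ _ Ua Ub lt; rewrite ha hb => /(lt_trans lt); rewrite ltxx.
  by have := rev _ _ Ub Ua lt; rewrite ha hb => /(lt_trans lt); rewrite ltxx.
have fix_cnt : countable [set a | U a /\ h a = a].
  case: (pselect (exists a0, U a0 /\ h a0 = a0)) => [[a0 [Ua0 ha0]]|none].
    by apply/(sub_countable _ (countable1 a0))/subset_card_le => a [Ua ha]; exact: fix_uniq.
  by apply/(sub_countable _ (countable0 W))/subset_card_le => a Ha; apply: none; exists a.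
have [lt_unc|gt_unc] :
    ~ countable [set a | U a /\ a < h a] \/ ~ countable [set a | U a /\ h a < a].
  apply: contrapT => /not_orP[/contrapT lt_cnt /contrapT gt_cnt]; apply: U_unc.
  apply/(sub_countable _ (countableU (countableU lt_cnt gt_cnt) fix_cnt)).
  apply: subset_card_le => a Ua.
  by case: (ltgtP a (h a)) => ?; [left; left | left; right | right].
- have [a [b [[Ua _] [Ub _] le_ab lt_hab]]] := capture_increasing_pair (u := id) (v := h)
    lt_unc (fun a => @proj2 _ _) (fun a b _ _ ab _ => ab).
  move: le_ab; rewrite le_eqVlt => /orP[/eqP/scheme_code_inj ab|/(rev a b Ua Ub)].
    by move: lt_hab; rewrite ab ltxx.
  by rewrite ltNge (ltW lt_hab).
- have [a [b [[Ua _] [Ub _] le_hab lt_ab]]] := capture_increasing_pair (u := h) (v := id)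
    gt_unc (fun a => @proj2 _ _) (fun a b _ _ _ ab => ab).
  by have := rev a b Ua Ub lt_ab; rewrite ltNge le_hab.
Qed.

End SchemeCode.

Section Placement.
Context {d : Order.disp_t} {W : orderType d}.
Local Open Scope ring_scope.
Variables (R : realType) (x : W -> R) (Wk : nat -> set W).
Hypothesis x_inj : injective x.
Hypothesis x_in01 : forall a, 0 <= x a <= 1.
Hypothesis Wk_unc : forall k, ~ countable (Wk k).
Hypothesis Wk_disj : forall i j a, Wk i a -> Wk j a -> i = j.

(* Indices that are not codes of a pair get the junk parameter (0, 0). *)
Definition piece_param (k : nat) : nat * rat := odflt (0%N, 0) (choice.unpickle k).
Definition piece_of (a : W) : nat := xget 0%N [set k | Wk k a].
Definition place (a : W) : R :=
  let: (j, q) := piece_param (piece_of a) in ratr q + x a / j.+1%:R.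

Lemma piece_ofE k a : Wk k a -> piece_of a = k.
Proof. by move=> Wka; exact: Wk_disj (@xgetI _ 0%N [set k | Wk k a] k Wka) Wka. Qed.

Lemma place_lt a b : piece_of a = piece_of b -> (place a < place b) = (x a < x b).
Proof.
move=> ab; rewrite /place ab; case: (piece_param (piece_of b)) => j q.
by rewrite ltrD2l ltr_pM2r // invr_gt0 ltr0n.
Qed.

Lemma place_inj a b : piece_of a = piece_of b -> place a = place b -> a = b.
Proof.
move=> ab eq_ab; apply: x_inj; apply/eqP; rewrite eq_le !leNgt -!place_lt //.
by rewrite eq_ab ltxx.
Qed.

Lemma place_dense a b : a < b ->
  exists2 Z : set W, ~ countable Z &
    (forall z, Z z -> a < place z < b) /\ {in Z &, injective place}.
Proof.
move=> ab; pose j := Num.truncn (2 / (b - a)).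
have [q aq qab] : exists2 q : rat, a < ratr q & ratr q < (a + b) / 2.
  have [q] : exists q : rat, ratr q \in `]a, (a + b) / 2[ by apply: rat_in_itvoo; lra.
  by rewrite in_itv /= => /andP[]; exists q.
have param : piece_param (choice.pickle (j, q)) = (j, q) by rewrite /piece_param choice.pickleK.
exists (Wk (choice.pickle (j, q))) => //; split=> [z Wz|z z' /set_mem Wz /set_mem Wz'].
  rewrite /place (piece_ofE Wz) param; set Q := ratr q; set X := x z / _.
  have aQ : a < Q := aq; have Qab : Q < (a + b) / 2 := qab.
  have [x_ge0 x_le1] := andP (x_in01 z).
  have N_gt0 : 0 < (j.+1%:R : R)^-1 by rewrite invr_gt0 ltr0n.
  have X_ge0 : 0 <= X by rewrite mulr_ge0 // ltW.
  have X_small : X < (b - a) / 2.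
    apply: le_lt_trans (ler_piMl (ltW N_gt0) x_le1) _.
    rewrite ltr_pdivlMr // mulrC ltr_pdivrMr ?ltr0n // mulrC.
    by rewrite -ltr_pdivrMr ?subr_gt0 // truncnS_gt.
  by apply/andP; split; lra.
by apply: place_inj; rewrite (piece_ofE Wz) (piece_ofE Wz').
Qed.

Hypothesis lt_wf : well_founded (fun a b : W => (a < b)%O).
Hypothesis countable_lt : forall a : W, countable [set b | (b < a)%O].

Lemma place_omega1_dense : omega1_dense W (range place).
Proof. exact: (omega1_dense_range lt_wf countable_lt place_dense). Qed.

Lemma opp_place_omega1_dense : omega1_dense W (range (fun a => - place a)).
Proof.
apply: (omega1_dense_range lt_wf countable_lt) => a b ab.
have [Z Z_unc [Z_ab place_inj]] : exists2 Z : set W, ~ countable Z &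
    (forall z, Z z -> - b < place z < - a) /\ {in Z &, injective place}.
  by apply: place_dense; rewrite ltrN2.
exists Z => //; split=> [z /Z_ab /andP[lo hi]|z z' Zz Zz' /oppr_inj]; last exact: place_inj.
by rewrite ltrNr hi ltrNl lo.
Qed.

Hypothesis W_uncountable : ~ countable [set: W].
Hypothesis x_not_reversed : forall (U : set W) (h : W -> W), ~ countable U ->
  ~ (forall a b, U a -> U b -> x a < x b -> x (h b) < x (h a)).

Lemma place_not_iso : ~ order_isomorphic (range place) (range (fun a => - place a)).
Proof.
move=> [f [[f_fun _ _] f_lt]].
have /all_sig[h fh] a : {b | f (place a) = - place b}.
  by apply: cid; have [b _ <-] := f_fun (place a) (ex_intro2 _ _ a I erefl); exists b.
have [[i k] U_unc] := uncountable_fiber (fun a => (piece_of a, piece_of (h a))) W_uncountable.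
apply: (x_not_reversed U_unc) => a b [_ [ia ka]] [_ [ib kb]] xab.
have := f_lt _ _ (ex_intro2 _ _ a I erefl) (ex_intro2 _ _ b I erefl).
rewrite !fh ltrN2 !place_lt ?ia ?ib ?ka ?kb //; exact.
Qed.

End Placement.

Theorem mainTheorem14 (d : Order.disp_t) (W : orderType d) :
  omega1_like W -> CA 2 W ->
  forall R : realType, exists A B : set R,
    [/\ omega1_dense W A, omega1_dense W B & ~ order_isomorphic A B].
Proof.
move=> [lt_wf W_unc countable_lt] CA2 R.
have [fam [scheme capturing]] := CA2 _ _ _ log_type (fun k _ => leqnn 2).
have n_two k : two_pieces k.+1 = 2 by [].
have W_inf : infinite_set [set: W] := fun fin => W_unc (finite_set_countable fin).
have [Wk [Wk_unc Wk_disj]] := uncountable_partition W_unc countable_lt.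
pose x := scheme_code log_size fam R.
have x_inj : injective x := scheme_code_inj log_type n_two scheme W_inf.
have x_in01 := scheme_code_in01 R log_type n_two scheme W_inf.
exists (range (place x Wk)), (range (fun a => - place x Wk a)%R); split.
- exact: (place_omega1_dense x_inj x_in01 Wk_unc Wk_disj lt_wf countable_lt).
- exact: (opp_place_omega1_dense x_inj x_in01 Wk_unc Wk_disj lt_wf countable_lt).
- exact: (place_not_iso W_unc (scheme_code_not_reversed log_type n_two scheme W_inf capturing)).
Qed.
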